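(* Let $R$ be a ring and $a\in R$. Then $a$ is feckly clean if and only if there exists $e\in R$ such that $$W(a-1)\subseteq W(e)\subseteq J\text{-spec}(R)\setminus W(a)\quad\text{and}\quad eR(1-e)\subseteq J(R).$$
   Context: Rings are associative with identity, not necessarily commutative; $J(R)$ is the Jacobson radical. An element $u\in R$ is full if $RuR=R$. An element $a\in R$ is feckly clean if there exist $e\in R$ and a full element $u\in R$ with $a=e+u$ and $eR(1-e)\subseteq J(R)$. $J\text{-spec}(R)$ is the set of all prime (two-sided) ideals $P$ of $R$ with $J(R)\subseteq P$. For an ideal $I$, $W(I)=\{P\in J\text{-spec}(R): I\subseteq P\}$, and for $a\in R$, $W(a)=W(RaR)$. *)

(* Rings: pzRingType (associative, with identity, possibly
   noncommutative; the zero ring is allowed). Subsets of R are predicates R -> Prop. *)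
From HB Require Import structures.
From mathcomp Require Import all_boot all_order all_algebra.
Set Implicit Arguments. Unset Strict Implicit. Unset Printing Implicit Defensive.
Import GRing.Theory.
Local Open Scope ring_scope.

Section Defs.
Variable R : pzRingType.

Definition left_ideal (L : R -> Prop) : Prop :=
  L 0 /\ (forall x y, L x -> L y -> L (x + y)) /\ (forall x, L x -> L (- x)) /\
  (forall r x, L x -> L (r * x)).

Definition ideal (I : R -> Prop) : Prop :=
  left_ideal I /\ (forall x r, I x -> I (x * r)).

Definition maximal_left_ideal (L : R -> Prop) : Prop :=
  left_ideal L /\ ~ L 1 /\
  (forall L', left_ideal L' -> (forall x, L x -> L' x) -> ~ L' 1 ->
     forall x, L' x -> L x).

Definition jacobson (x : R) : Prop :=
  forall L, maximal_left_ideal L -> L x.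

Definition prime_ideal (P : R -> Prop) : Prop :=
  ideal P /\ ~ P 1 /\
  (forall A B, ideal A -> ideal B ->
     (forall a b, A a -> B b -> P (a * b)) ->
     (forall a, A a -> P a) \/ (forall b, B b -> P b)).

Definition Jspec (P : R -> Prop) : Prop :=
  prime_ideal P /\ (forall x, jacobson x -> P x).

Definition RaR (a : R) (x : R) : Prop :=
  exists s : seq (R * R), x = \sum_(p <- s) (p.1 * a * p.2).

Definition W_ideal (I : R -> Prop) (P : R -> Prop) : Prop :=
  Jspec P /\ (forall x, I x -> P x).
Definition W (a : R) (P : R -> Prop) : Prop := W_ideal (RaR a) P.

Definition full (u : R) : Prop := forall x, RaR u x.

Definition ecorner_in_J (e : R) : Prop :=
  forall r, jacobson (e * r * (1 - e)).

Definition feckly_clean (a : R) : Prop :=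
  exists e u, full u /\ a = e + u /\ ecorner_in_J e.

End Defs.

From HB Require Import structures.
From mathcomp Require Import all_boot all_order all_algebra.
From mathcomp Require Import boolp classical_sets.
Set Implicit Arguments. Unset Strict Implicit. Unset Printing Implicit Defensive.
Import GRing.Theory.
Local Open Scope ring_scope.

(* If eR(1-e) lies in J, primeness forces every P in J-spec to contain e or
   1 - e. An element u is full iff no P in J-spec contains u: a non-full u lies
   in a maximal left ideal L, hence in the primitive ideal ann(R/L), which is
   prime and contains J. For u = a - e the inclusions W(a-1) <= W(e) and
   W(e) disjoint from W(a) say exactly that no P in J-spec contains u. *)

Section PrimitiveIdeals.
Variable R : pzRingType.
Implicit Types (a e u x y r : R) (I L P : R -> Prop).

Lemma ideal_add I x y : ideal I -> I x -> I y -> I (x + y).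
Proof. by move=> [[_ [ID _]] _]; apply: ID. Qed.

Lemma ideal_sub I x y : ideal I -> I x -> I y -> I (x - y).
Proof. by move=> [[_ [ID [IN _]]] _] Ix Iy; apply: ID => //; apply: IN. Qed.

Lemma RaR_self a : RaR a a.
Proof. by exists [:: (1, 1)]; rewrite big_seq1 /= mul1r mulr1. Qed.

Lemma ideal_RaR a : ideal (RaR a).
Proof.
split; [split|].
- by exists [::]; rewrite big_nil.
- split; first by move=> x y [s ->] [t ->]; exists (s ++ t); rewrite big_cat.
  split.
    move=> x [s ->]; exists [seq (- p.1, p.2) | p <- s].
    by rewrite big_map -sumrN; apply: eq_bigr => p _; rewrite !mulNr.
  move=> r x [s ->]; exists [seq (r * p.1, p.2) | p <- s].
  by rewrite big_map mulr_sumr; apply: eq_bigr => p _; rewrite !mulrA.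
- move=> x r [s ->]; exists [seq (p.1, p.2 * r) | p <- s].
  by rewrite big_map mulr_suml; apply: eq_bigr => p _; rewrite !mulrA.
Qed.

Lemma RaR_sub_ideal I a x : ideal I -> I a -> RaR a x -> I x.
Proof.
move=> [[I0 [ID [_ IM]]] IMr] Ia [s ->].
elim: s => [|p s IHs]; first by rewrite big_nil.
by rewrite big_cons; apply: ID => //; apply: IMr; apply: IM.
Qed.

Lemma full_RaR1 u : RaR u 1 -> full u.
Proof.
by move=> RaR1 x; rewrite -[x]mulr1; case: (ideal_RaR u) => -[_ [_ [_ +]]] _; apply.
Qed.

Lemma notin_proper_ideal_full I u : ideal I -> ~ I 1 -> full u -> ~ I u.
Proof. by move=> idI nI1 fu Iu; apply: nI1; exact: RaR_sub_ideal idI Iu (fu 1). Qed.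

Lemma prime_ideal_mul P x y :
  prime_ideal P -> (forall r, P (x * r * y)) -> P x \/ P y.
Proof.
move=> [[[P0 [PD [PN PM]]] PMr] [_ Pprime]] Pxy.
pose A a := forall r, P (a * r * y).
pose B b := forall a, A a -> P (a * b).
have idA : ideal A.
  split; [split|].
  - by move=> r; rewrite !mul0r.
  - split; first by move=> a b Aa Ab r; rewrite !mulrDl; apply: PD.
    split; first by move=> a Aa r; rewrite !mulNr; apply: PN.
    by move=> s a Aa r; rewrite -!mulrA; apply: PM; rewrite !mulrA.
  - by move=> a s Aa r; rewrite -(mulrA a); apply: Aa.
have idB : ideal B.
  split; [split|].
  - by move=> a _; rewrite mulr0.
  - split; first by move=> b c Bb Bc a Aa; rewrite mulrDr; apply: PD; auto.
    split; first by move=> b Bb a Aa; rewrite mulrN; apply: PN; auto.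
    move=> s b Bb a Aa; rewrite mulrA; apply: Bb.
    by move=> r; rewrite -(mulrA a); apply: Aa.
  - by move=> b s Bb a Aa; rewrite mulrA; apply: PMr; auto.
have By : B y by move=> a Aa; rewrite -[a]mulr1; apply: Aa.
case: (Pprime A B idA idB) => [a b Aa Bb|PA|PB]; first exact: Bb.
  by left; apply: PA.
by right; apply: PB.
Qed.

Lemma Jspec_corner P e : Jspec P -> ecorner_in_J e -> P e \/ P (1 - e).
Proof.
by move=> [Pprime PJ] He; apply: (prime_ideal_mul Pprime) => r; apply/PJ.
Qed.

Lemma W_mem P x : W x P <-> Jspec P /\ P x.
Proof.
split=> [[JP Px]|[JP Px]]; first by split=> //; apply/Px/RaR_self.
by split=> // y; apply: RaR_sub_ideal Px; case: JP => -[].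
Qed.

(* The annihilator of the left module R/L, i.e. the largest ideal inside L. *)
Definition ann_quot L x := forall r, L (x * r).

Lemma left_ideal_rmul L r : left_ideal L -> left_ideal (fun y => L (y * r)).
Proof.
move=> [L0 [LD [LN LM]]]; split; first by rewrite mul0r.
split; first by move=> x y Lx Ly; rewrite mulrDl; apply: LD.
split; first by move=> x Lx; rewrite mulNr; apply: LN.
by move=> s x Lx; rewrite -mulrA; apply: LM.
Qed.

Lemma ideal_ann_quot L : left_ideal L -> ideal (ann_quot L).
Proof.
move=> Ll; have Lr r := left_ideal_rmul r Ll.
split; last by move=> x r Lx s; rewrite -mulrA.
split; first by move=> r; case: (Lr r).
split; first by move=> x y Lx Ly r; case: (Lr r) => _ [+ _]; apply.
split; first by move=> x Lx r; case: (Lr r) => _ [_ [+ _]]; apply.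
by move=> s x Lx r; case: (Lr r) => _ [_ [_ +]]; apply.
Qed.

Lemma ideal_sub_ann_quot I L x :
  ideal I -> (forall y, I y -> L y) -> I x -> ann_quot L x.
Proof. by move=> [_ IMr] IL Ix r; apply/IL/IMr. Qed.

Lemma maximal_left_ideal_comax L x :
  maximal_left_ideal L -> ~ L x -> exists l y, L l /\ 1 = l + y * x.
Proof.
move=> [[L0 [LD [LN LM]]] [_ Lmax]] nLx.
pose K z := exists l y, L l /\ z = l + y * x.
have Kl : left_ideal K.
  split; first by exists 0, 0; rewrite mul0r addr0.
  split.
    move=> _ _ [l1 [y1 [Ll1 ->]]] [l2 [y2 [Ll2 ->]]]; exists (l1 + l2), (y1 + y2).
    by split; [apply: LD|rewrite mulrDl addrACA].
  split.
    move=> _ [l [y [Ll ->]]]; exists (- l), (- y).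
    by split; [apply: LN|rewrite opprD mulNr].
  move=> r _ [l [y [Ll ->]]]; exists (r * l), (r * y).
  by split; [apply: LM|rewrite mulrDr mulrA].
apply: contrapT => nK1; apply/nLx/(Lmax K Kl) => //.
- by move=> z Lz; exists z, 0; rewrite mul0r addr0.
- by exists 0, 1; rewrite mul1r add0r.
Qed.

(* The preimage of L is the annihilator of r + L in the simple module R/L. *)
Lemma maximal_left_ideal_rmul L r :
  maximal_left_ideal L -> ~ L r -> maximal_left_ideal (fun y => L (y * r)).
Proof.
move=> Lmax nLr; have [Ll _] := Lmax.
split; first exact: left_ideal_rmul.
split; first by rewrite mul1r.
move=> K [_ [KD [_ KM]]] LK nK1 x Kx; apply: contrapT => nLxr.
have [l [y [Ll' Dl]]] := maximal_left_ideal_comax Lmax nLxr.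
have K1ryx : K (1 - r * y * x).
  apply: LK; rewrite mulrBl mul1r -!mulrA -{1}[r]mulr1 Dl mulrDr addrK.
  by case: Ll => _ [_ [_ +]]; apply.
by apply: nK1; rewrite -(subrK (r * y * x) 1); apply: KD => //; apply: KM.
Qed.

Lemma prime_ann_quot L : maximal_left_ideal L -> prime_ideal (ann_quot L).
Proof.
move=> Lmax; have [Ll [nL1 _]] := Lmax; have [_ [LD [_ LM]]] := Ll.
split; first exact: ideal_ann_quot.
split; first by move/(_ 1); rewrite mulr1.
move=> A B [_ AMr] _ AB.
case: (pselect (forall b, B b -> ann_quot L b)) => [|/existsNP [b]]; first by right.
move/not_implyP => [Bb /existsNP [s nLbs]]; left => a Aa r.
have [l [y [Ll' Dl]]] := maximal_left_ideal_comax Lmax nLbs.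
rewrite -[a * r]mulr1 Dl mulrDr; apply: LD; first exact: LM.
by rewrite !mulrA -(mulrA a r y); apply: AB => //; apply: AMr.
Qed.

Lemma jacobson_ann_quot L x : maximal_left_ideal L -> jacobson x -> ann_quot L x.
Proof.
move=> Lmax Jx r; case: (pselect (L r)) => [Lr|nLr].
  by case: Lmax => -[_ [_ [_ +]]] _; apply.
exact: Jx _ (maximal_left_ideal_rmul Lmax nLr).
Qed.

Lemma Jspec_ann_quot L : maximal_left_ideal L -> Jspec (ann_quot L).
Proof.
by move=> Lmax; split=> [|x]; [exact: prime_ann_quot|exact: jacobson_ann_quot].
Qed.

Lemma left_ideal_bigcup (T : Type) (A : T -> Prop) (X : T -> R -> Prop) :
  (exists i, A i) ->
  (forall i j, A i -> A j -> (forall x, X i x -> X j x) \/ (forall x, X j x -> X i x)) ->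
  (forall i, A i -> left_ideal (X i)) ->
  left_ideal (fun x => exists2 i, A i & X i x).
Proof.
move=> [i0 Ai0] Xtot Xl; split; first by exists i0 => //; case: (Xl _ Ai0).
split.
  move=> x y [i Ai Xix] [j Aj Xjy].
  case: (Xtot i j Ai Aj) => [ij|ji].
    by exists j => //; case: (Xl _ Aj) => _ [+ _]; apply; first exact: ij.
  by exists i => //; case: (Xl _ Ai) => _ [+ _]; apply; last exact: ji.
split.
  by move=> x [i Ai Xix]; exists i => //; case: (Xl _ Ai) => _ [_ [+ _]]; apply.
by move=> r x [i Ai Xix]; exists i => //; case: (Xl _ Ai) => _ [_ [_ +]]; apply.
Qed.

Lemma exists_maximal_left_ideal I : left_ideal I -> ~ I 1 ->
  exists2 L, maximal_left_ideal L & forall x, I x -> L x.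
Proof.
move=> Il nI1.
pose T := {L : R -> Prop | [/\ left_ideal L, ~ L 1 & forall x, I x -> L x]}.
pose le (s t : T) := `[< forall x, sval s x -> sval t x >].
pose t0 : T := exist _ I (And3 Il nI1 (fun x (Ix : I x) => Ix)).
have [[L [Ll nL1 IL]] Lmax] : exists t, premaximal le t.
  apply: (ZL_preorder t0) => [s|r s t /asboolP rs /asboolP st|A Atot].
  - exact/asboolP.
  - by apply/asboolP => x /rs /st.
  case: (pselect (exists t, A t)) => [[t1 At1]|noA]; last first.
    by exists t0 => s As; case: noA; exists s.
  pose U x := exists2 t, A t & sval t x.
  have Ul : left_ideal U.
    apply: left_ideal_bigcup => [|s t As At|t _]; [by exists t1| |by case: (svalP t)].
    by case: (Atot s t As At) => /asboolP; [left|right].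
  have nU1 : ~ U 1 by move=> [t _]; case: (svalP t).
  have IU x : I x -> U x.
    by move=> Ix; exists t1 => //; case: (svalP t1) => _ _; apply.
  by exists (exist _ U (And3 Ul nU1 IU) : T) => s As; apply/asboolP => x sx; exists s.
exists L => //; split=> //; split=> // L' L'l LL' nL'1.
have IL' x : I x -> L' x by move/IL/LL'.
by apply/asboolP/(Lmax (exist _ L' (And3 L'l nL'1 IL') : T)); apply/asboolP.
Qed.

Lemma full_Jspec u : full u <-> forall P, Jspec P -> ~ P u.
Proof.
split=> [fu P [[idP [nP1 _]] _]|nPu]; first exact: notin_proper_ideal_full.
apply: contrapT => nfu.
have nRaR1 : ~ RaR u 1 by move/full_RaR1.
have [L Lmax RaR_L] := exists_maximal_left_ideal (ideal_RaR u).1 nRaR1.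
apply: (nPu _ (Jspec_ann_quot Lmax)).
exact: ideal_sub_ann_quot (ideal_RaR u) RaR_L (RaR_self u).
Qed.

End PrimitiveIdeals.

Theorem lemma3p1 (R : pzRingType) (a : R) :
  feckly_clean a <->
  exists e : R,
    (forall P : R -> Prop, W (a - 1) P -> W e P) /\
    (forall P : R -> Prop, W e P -> Jspec P /\ ~ W a P) /\
    ecorner_in_J e.
Proof.
split=> [[e [u [fu [-> He]]]]|[e [W_a1_e [W_e_a He]]]].
  have nPu := (full_Jspec u).1 fu.
  exists e; split; [|split] => // P /W_mem [JP Px]; have idP := JP.1.1.
    apply/W_mem; split=> //; case: (Jspec_corner JP He) => // P1e.
    case: (nPu P JP); have -> : u = (e + u - 1) + (1 - e).
      by rewrite addrA subrK addrC addKr.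
    exact: ideal_add.
  split=> // /W_mem [_ Peu]; apply: (nPu P JP).
  have -> : u = (e + u) - e by rewrite addrC addKr.
  exact: ideal_sub.
exists e, (a - e); split; last by split; first by rewrite addrC subrK.
apply/full_Jspec => P JP Pae; have idP := JP.1.1.
case: (Jspec_corner JP He) => [Pe|P1e].
  have [_] := W_e_a P ((W_mem P e).2 (conj JP Pe)); apply; apply/W_mem.
  by split=> //; rewrite -(subrK e a); apply: ideal_add.
have Pa1 : P (a - 1).
  have -> : a - 1 = (a - e) - (1 - e) by rewrite opprB addrA subrK.
  exact: ideal_sub.
have /W_mem [_ Pe] := W_a1_e P ((W_mem P _).2 (conj JP Pa1)).
apply: JP.1.2.1; rewrite -(subrK e 1); exact: ideal_add.
Qed.
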